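(* Let $(X,\phi)$ be a uniformly Lipschitz flow on a compact metric space $(X,d)$, let $L=L(1)$, and let $\mu\in\mathcal{M}(X)$. Then for every $\delta\in(0,1)$ and every $\epsilon>0$, \begin{align*} \overline{h}^K_\mu(\epsilon,\delta,\phi_1)\le\overline{h}^K_\mu(\epsilon,\delta,\phi)\le\overline{h}^K_\mu(\epsilon/L,\delta,\phi_1),\\ \underline{h}^K_\mu(\epsilon,\delta,\phi_1)\le\underline{h}^K_\mu(\epsilon,\delta,\phi)\le\underline{h}^K_\mu(\epsilon/L,\delta,\phi_1). \end{align*}
   Context: A flow: $\phi:X\times\mathbb{R}\to X$ continuous, $\phi_t(x)=\phi(x,t)$, $\phi_0=\mathrm{id}$, $\phi_{t+s}=\phi_t\circ\phi_s$. Uniformly Lipschitz: for every $t_0>0$ there is $L(t_0)>0$ such that for all $\epsilon>0$ and $x,y\in X$, $d(x,y)\le\epsilon/L(t_0)$ implies $d(\phi_sx,\phi_sy)<\epsilon$ for all $s\in[0,t_0]$. $\mathcal{M}(X)$: Borel probability measures on $X$. Balls: $B_t(x,\epsilon,\phi)=\{y:d(\phi_sx,\phi_sy)<\epsilon\ \forall s\in[0,t]\}$, $B_n(x,\epsilon,\phi_1)=\{y:d(\phi_jx,\phi_jy)<\epsilon,\ j=0,\dots,n-1\}$. Katok entropies: $R^\delta_\mu(t,\epsilon,\phi)=\min\{\#E:E\subset X,\ \mu(\bigcup_{x\in E}B_t(x,\epsilon,\phi))>\delta\}$, $\overline{h}^K_\mu(\epsilon,\delta,\phi)=\limsup_{t\to\infty}\frac1t\log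 R^\delta_\mu(t,\epsilon,\phi)$, $\underline{h}^K_\mu(\epsilon,\delta,\phi)=\liminf_{t\to\infty}\frac1t\log R^\delta_\mu(t,\epsilon,\phi)$; $R^\delta_\mu(n,\epsilon,\phi_1)$, $\overline{h}^K_\mu(\epsilon,\delta,\phi_1)$, $\underline{h}^K_\mu(\epsilon,\delta,\phi_1)$ are defined in the same way using $B_n(x,\epsilon,\phi_1)$ and $n\in\mathbb{N}$, $n\to\infty$. *)

From Stdlib Require List.
From HB Require Import structures.
From mathcomp Require Import all_boot all_order all_algebra.
From mathcomp Require Import all_classical all_reals all_analysis.
Set Implicit Arguments. Unset Strict Implicit. Unset Printing Implicit Defensive.
Import Order.TTheory GRing.Theory Num.Theory numFieldNormedType.Exports.
Local Open Scope classical_set_scope.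
Local Open Scope ring_scope.

Section Defs.
Variables (R : realType) (X : Type).

Definition is_metric (d : X -> X -> R) : Prop :=
  [/\ (forall x y, 0 <= d x y),
      (forall x y, d x y = 0 <-> x = y),
      (forall x y, d x y = d y x) &
      (forall x y z, d x z <= d x y + d y z)].

Definition dopen (d : X -> X -> R) (A : set X) : Prop :=
  forall x, A x -> exists2 e : R, 0 < e & forall y, d x y < e -> A y.

Definition dcompact (d : X -> X -> R) : Prop :=
  forall (I : Type) (U : I -> set X), (forall i, dopen d (U i)) ->
    (forall x, exists i, U i x) ->
    exists s : seq I, forall x, exists i, List.In i s /\ U i x.

(* phi x t = phi_t(x) is a (continuous) flow on (X, d) *)
Definition is_flow (d : X -> X -> R) (phi : X -> R -> X) : Prop :=
  [/\ (forall x t e, 0 < e -> exists2 eta : R, 0 < eta &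
         forall y s, d x y < eta -> `|t - s| < eta -> d (phi x t) (phi y s) < e),
      (forall x, phi x 0 = x) &
      (forall x t s, phi x (t + s) = phi (phi x s) t)].

(* L is a constant L(t0) in the definition of uniformly Lipschitz *)
Definition unif_lip_const (d : X -> X -> R) (phi : X -> R -> X) (t0 L : R) : Prop :=
  0 < L /\ forall (eps : R) x y, 0 < eps -> d x y <= eps / L ->
    forall s, 0 <= s <= t0 -> d (phi x s) (phi y s) < eps.

Definition unif_lipschitz (d : X -> X -> R) (phi : X -> R -> X) : Prop :=
  forall t0 : R, 0 < t0 -> exists L, unif_lip_const d phi t0 L.

Definition bowen_ball_flow (d : X -> X -> R) (phi : X -> R -> X) (t : R) (x : X)
  (eps : R) : set X :=
  [set y | forall s, 0 <= s <= t -> d (phi x s) (phi y s) < eps].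

Definition bowen_ball_time1 (d : X -> X -> R) (phi : X -> R -> X) (n : nat) (x : X)
  (eps : R) : set X :=
  [set y | forall j : nat, (j < n)%N -> d (phi x j%:R) (phi y j%:R) < eps].

End Defs.

Section Katok.
Variables (dX : measure_display) (X : measurableType dX) (R : realType).

Definition borel_for (d : X -> X -> R) : Prop :=
  (@measurable dX X) = <<s dopen d >>.

Definition katokR (mu : probability X R) (B : X -> set X) (delta : R) : R :=
  inf [set (size E)%:R | E in
        [set E : seq X | (delta%:E < mu (\bigcup_(x in [set x | List.In x E]) B x))%E]].

Definition katok_upper_flow (mu : probability X R) (d : X -> X -> R)
  (phi : X -> R -> X) (eps delta : R) : \bar R :=
  limf_esup (fun t : R => (ln (katokR mu (fun x => bowen_ball_flow d phi t x eps) delta) / t)%:E)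
    (pinfty_nbhs R).

Definition katok_lower_flow (mu : probability X R) (d : X -> X -> R)
  (phi : X -> R -> X) (eps delta : R) : \bar R :=
  limf_einf (fun t : R => (ln (katokR mu (fun x => bowen_ball_flow d phi t x eps) delta) / t)%:E)
    (pinfty_nbhs R).

Definition katok_upper_time1 (mu : probability X R) (d : X -> X -> R)
  (phi : X -> R -> X) (eps delta : R) : \bar R :=
  limn_esup (fun n : nat => (ln (katokR mu (fun x => bowen_ball_time1 d phi n x eps) delta) / n%:R)%:E).

Definition katok_lower_time1 (mu : probability X R) (d : X -> X -> R)
  (phi : X -> R -> X) (eps delta : R) : \bar R :=
  limn_einf (fun n : nat => (ln (katokR mu (fun x => bowen_ball_time1 d phi n x eps) delta) / n%:R)%:E).

End Katok.

From HB Require Import structures.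
From mathcomp Require Import all_boot all_order all_algebra.
From mathcomp Require Import all_classical all_reals all_analysis.
From mathcomp Require Import lra.
Set Implicit Arguments.
Unset Strict Implicit.
Unset Printing Implicit Defensive.

Import Order.TTheory GRing.Theory Num.Theory numFieldNormedType.Exports.
Local Open Scope classical_set_scope.
Local Open Scope ring_scope.

(** For [n <= t + 1] the flow Bowen ball [B_t(x, eps)] lies in the time-one
    Bowen ball [B_n(x, eps)], and since [phi] is [L]-Lipschitz on time
    intervals of length one, [B_n(x, eps / L)] lies in [B_t(x, eps)] when [t <= n].
    Katok numbers are antitone under inclusion of open balls, hence
    [R(n, eps, phi_1) <= R(t, eps, phi) <= R(n, eps / L, phi_1)] for
    [n - 1 <= t <= n].  Taking logarithms, dividing by [t] resp. [n] and comparing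
    [t] with [floor t + 1] transfers these bounds to the upper and lower growth
    rates.  Compactness makes every Katok number finite and at least one, and the
    Borel hypothesis makes unions of balls measurable. *)

Section limf_esup_einf_comparison.
Variables (R : realType) (T1 T2 : choiceType) (X1 : filteredType T1) (X2 : filteredType T2).
Local Open Scope ereal_scope.

Lemma le_limf_esup (f : X1 -> \bar R) (g : X2 -> \bar R) F G :
  (forall V, G V -> exists2 U, F U & forall x, U x -> exists2 y, V y & f x <= g y) ->
  limf_esup f F <= limf_esup g G.
Proof.
move=> fg; rewrite !limf_esupE; apply: le_ereal_inf_tmp => _ [V GV <-].
have [U FU Ufg] := fg V GV.
apply: le_trans (ereal_inf_lbound _) _; first by exists U.
apply: ge_ereal_sup => _ [x Ux <-]; have [y Vy fxgy] := Ufg x Ux.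
by apply: le_trans fxgy _; apply: ereal_sup_ubound; exists y.
Qed.

Lemma le_limf_einf (f : X1 -> \bar R) (g : X2 -> \bar R) F G :
  (forall U, F U -> exists2 V, G V & forall y, V y -> exists2 x, U x & f x <= g y) ->
  limf_einf f F <= limf_einf g G.
Proof.
move=> fg; rewrite !limf_einfE; apply: ge_ereal_sup => _ [U FU <-].
have [V GV Vfg] := fg U FU.
apply: le_trans _ (ereal_sup_ubound _); last by exists V.
apply: le_ereal_inf_tmp => _ [y Vy <-]; have [x Ux fxgy] := Vfg y Vy.
by apply: le_trans _ fxgy; apply: ereal_inf_lbound; exists x.
Qed.

End limf_esup_einf_comparison.

Section limf_esup_near.
Variables (R : realType) (T : choiceType) (X : filteredType T).
Local Open Scope ereal_scope.

Lemma limf_esup_le_near (f : X -> \bar R) (F : set_system X) a :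
  (\forall x \near F, f x <= a) -> limf_esup f F <= a.
Proof.
move=> Ffa; rewrite limf_esupE; apply: le_trans (ereal_inf_lbound _) _.
  by exists [set x | f x <= a].
by apply: ge_ereal_sup => _ [x fxa <-].
Qed.

Lemma near_lt_limf_esup (f : X -> \bar R) (F : set_system X) a : Filter F ->
  limf_esup f F < a -> \forall x \near F, f x < a.
Proof.
move=> FF; rewrite limf_esupE => /ereal_inf_lt[_ [V FV <-] supVa].
apply: filterS FV => x Vx; apply: le_lt_trans supVa.
by apply: ereal_sup_ubound; exists x.
Qed.

End limf_esup_near.

Lemma ler_ln_ge1 (R : realType) (x y : R) : 1 <= x -> x <= y -> ln x <= ln y.
Proof. by move=> x1 xy; rewrite ler_ln ?posrE ?(lt_le_trans ltr01) ?(le_trans x1). Qed.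

Section growth_rate_comparison.
Variable R : realType.
Implicit Types (u : nat -> R) (f : R -> R).
Local Open Scope ereal_scope.

Lemma limn_esup_div_le_limf u f : (forall n, (u n <= f n%:R)%R) ->
  limn_esup (fun n => (u n / n%:R)%:E) <=
  limf_esup (fun t => (f t / t)%:E) (pinfty_nbhs R).
Proof.
move=> uf; apply: le_limf_esup => V [M [_ MV]].
exists [set n | (M < n%:R)%R]; first exact: nbhs_infty_gtr.
move=> n /= Mn; exists n%:R; first exact: MV.
by rewrite lee_fin ler_wpM2r ?invr_ge0.
Qed.

Lemma limf_einf_div_le_limn u f : (forall n, (0 < n)%N -> (f n%:R <= u n)%R) ->
  limf_einf (fun t => (f t / t)%:E) (pinfty_nbhs R) <=
  limn_einf (fun n => (u n / n%:R)%:E).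
Proof.
move=> fu; apply: le_limf_einf => U [M [_ MU]].
exists [set n | (M < n%:R)%R]; first exact: nbhs_infty_gtr.
move=> n /= Mn; exists n%:R; first exact: MU.
(* at [n = 0] both ratios are [0], since [x / 0 = 0] *)
rewrite lee_fin; case: n {Mn} => [|n]; first by rewrite invr0 !mulr0.
by rewrite ler_wpM2r ?invr_ge0 ?fu.
Qed.

Lemma limn_einf_div_le_limf u f : (forall n, (0 <= u n)%R) ->
  (forall t, (0 < t)%R -> (u (Num.truncn t).+1 <= f t)%R) ->
  limn_einf (fun n => (u n / n%:R)%:E) <=
  limf_einf (fun t => (f t / t)%:E) (pinfty_nbhs R).
Proof.
move=> u0 uf; apply: le_limf_einf => U [N _ NU].
exists [set t | (N%:R < t)%R]; first exact/nbhs_pinfty_gt/num_real.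
move=> t /= Nt; have t0 : (0 < t)%R by apply: le_lt_trans Nt.
have /andP[_ tm] := truncn_itv (ltW t0).
exists (Num.truncn t).+1.
  by apply/NU/leqW; rewrite /= truncn_ge_nat ?ltW.
by rewrite lee_fin ler_pM ?invr_ge0 ?uf // lef_pV2 ?posrE ?ltW.
Qed.

Lemma limf_esup_div_le_limn u f : (forall n, (0 <= u n)%R) ->
  (forall t, (0 < t)%R -> (f t <= u (Num.truncn t).+1)%R) ->
  limf_esup (fun t => (f t / t)%:E) (pinfty_nbhs R) <=
  limn_esup (fun n => (u n / n%:R)%:E).
Proof.
move=> u0 fu; set l := limn_esup _.
have : 0 <= l.
  by apply: limf_esup_ge0 => [[N _ /(_ N (leqnn N))]|n] //; rewrite lee_fin divr_ge0.
case El: l => [r| |] // r0; last by rewrite leey.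
rewrite lee_fin in r0; apply/lee_addgt0Pr => e e0.
(* eventually [u n <= q n], so [f t <= q (t + 1) <= (r + e) t] for large [t] *)
pose q := (r + e / 2)%R.
have : l < q%:E by rewrite El lte_fin /q; lra.
move=> /near_lt_limf_esup[N _ uq].
apply: limf_esup_le_near; exists (N%:R + 2 * q / e)%R; split; first exact: num_real.
move=> t /= qt; have q0 : (0 < q)%R by rewrite /q; lra.
have qe0 : (0 <= 2 * q / e)%R by rewrite divr_ge0 ?mulr_ge0 ?ltW.
have t0 : (0 < t)%R by have := ler0n R N; lra.
set m := (Num.truncn t).+1.
have tm : ((Num.truncn t)%:R <= t)%R by rewrite truncn_le ltW.
have Nm : (N <= m)%N by apply/leqW; rewrite truncn_ge_nat ?ltW //; lra.
have := uq m Nm; rewrite lte_fin ltr_pdivrMr ?ltr0n // => umq.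
have qt2 : (q <= e / 2 * t)%R.
  have : (2 * q / e < t)%R by have := ler0n R N; lra.
  by rewrite ltr_pdivrMr // => h; lra.
rewrite -EFinD lee_fin ler_pdivrMr //.
have mt : (m%:R <= t + 1)%R by rewrite /m -natr1; lra.
have qmt := ler_wpM2l (ltW q0) mt.
have qtE : (q * t = r * t + e / 2 * t)%R by rewrite /q mulrDl.
have := fu t t0; lra.
Qed.

End growth_rate_comparison.

Section katok_numbers.
Variables (R : realType) (dX : measure_display) (X : measurableType dX)
  (d : X -> X -> R) (mu : probability X R).
Hypotheses (d_compact : dcompact d) (d_borel : borel_for d).
Implicit Types (B : X -> set X) (delta : R).

Local Notation cover B E := (\bigcup_(x in [set x | List.In x E]) B x).

Lemma dopen_measurable A : dopen d A -> measurable A.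
Proof. by move=> oA; rewrite d_borel; apply: sub_gen_smallest. Qed.

Lemma dopen_bigcup (P : set X) B :
  (forall x, dopen d (B x)) -> dopen d (\bigcup_(x in P) B x).
Proof.
move=> oB y [x Px Bxy]; have [e e0 ballB] := oB x y Bxy.
by exists e => // z dyz; exists x => //; apply: ballB.
Qed.

Lemma exists_katok_cover B delta : (forall x, dopen d (B x)) ->
  (forall x, B x x) -> delta < 1 -> exists E, (delta%:E < mu (cover B E))%E.
Proof.
move=> oB Bxx delta1.
have [E BE] := @d_compact X B oB (fun x => ex_intro _ x (Bxx x)).
exists E; suff -> : cover B E = setT by rewrite probability_setT lte_fin.
by apply/seteqP; split => // y _; have [x [Ex Bxy]] := BE y; exists x.
Qed.

Lemma katokR_ge1 B delta : (forall x, dopen d (B x)) -> (forall x, B x x) ->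
  0 <= delta < 1 -> 1 <= katokR mu B delta.
Proof.
move=> oB Bxx /andP[delta0 delta1]; apply: lb_le_inf.
  by have [E BE] := exists_katok_cover oB Bxx delta1; exists (size E)%:R, E.
move=> _ [[|? ?] BE <-]; last by rewrite ler1n.
have cover0 : cover B [::] = set0 by apply/seteqP; split => // y [].
by move: BE; rewrite /= cover0 measure0 lte_fin ltNge delta0.
Qed.

Lemma le_katokR B1 B2 delta : (forall x, dopen d (B1 x)) -> (forall x, B1 x x) ->
  (forall x, dopen d (B2 x)) -> delta < 1 -> (forall x, B1 x `<=` B2 x) ->
  katokR mu B2 delta <= katokR mu B1 delta.
Proof.
move=> oB1 B1xx oB2 delta1 B12; apply: lb_le_inf.
  by have [E BE] := exists_katok_cover oB1 B1xx delta1; exists (size E)%:R, E.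
move=> _ [E B1E <-]; apply: ge_inf; first by exists 0 => _ [F _ <-].
exists E => //; apply: lt_le_trans B1E _; apply: le_measure.
- by rewrite inE; apply/dopen_measurable/dopen_bigcup.
- by rewrite inE; apply/dopen_measurable/dopen_bigcup.
- by move=> y [x Ex /B12 B2xy]; exists x.
Qed.

End katok_numbers.

Lemma exists_nat_step (R : realType) (s : R) n : (0 < n)%N -> 0 <= s <= n%:R ->
  exists2 j : nat, (j < n)%N & j%:R <= s <= j%:R + 1.
Proof.
move=> n0 /andP[s0 sn]; have /andP[js sj] := truncn_itv s0.
have [jn|nj] := ltnP (Num.truncn s) n.
  by exists (Num.truncn s) => //; rewrite js natr1 ltW.
exists n.-1; first by rewrite prednK.
rewrite natr1 prednK // sn andbT; apply: le_trans js.
by rewrite ler_nat (leq_trans (leq_pred n)).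
Qed.

Section bowen_balls.
Variables (R : realType) (X : Type) (d : X -> X -> R) (phi : X -> R -> X).
Hypotheses (d_metric : is_metric d) (phi_flow : is_flow d phi).

Lemma metric_le_quad x y x' y' : d x y <= d x x' + d x' y' + d y' y.
Proof.
have [_ _ _ dT] := d_metric.
by apply: le_trans (dT _ x' _) _; rewrite -addrA lerD2l dT.
Qed.

Lemma continuous_orbit_dist x y : continuous (fun s => d (phi x s) (phi y s)).
Proof.
have [_ d0 dC _] := d_metric; have [phi_cont _ _] := phi_flow.
move=> s; apply/cvgrPdist_lt => e e0.
have e20 : 0 < e / 2 by rewrite divr_gt0.
have [eta_x eta_x0 near_x] := phi_cont x s _ e20.
have [eta_y eta_y0 near_y] := phi_cont y s _ e20.
apply/nbhs_ballP; exists (Num.min eta_x eta_y); first by rewrite /= lt_min eta_x0 eta_y0.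
move=> s'; rewrite /ball /= lt_min => /andP[sx sy].
have := near_x x s'; rewrite (proj2 (d0 x x)) // => /(_ eta_x0 sx) dx.
have := near_y y s'; rewrite (proj2 (d0 y y)) // => /(_ eta_y0 sy) dy.
have := metric_le_quad (phi x s) (phi y s) (phi x s') (phi y s').
have := metric_le_quad (phi x s') (phi y s') (phi x s) (phi y s).
rewrite (dC (phi x s') (phi x s)) (dC (phi y s') (phi y s)) ltr_norml; lra.
Qed.

Lemma bowen_ball_time1_open n x eps : dopen d (bowen_ball_time1 d phi n x eps).
Proof.
have [_ _ _ dT] := d_metric; have [phi_cont _ _] := phi_flow.
elim: n => [|n IHn] y xy; first by exists 1 => // z _ [].
have [e1 e10 ball_n] : exists2 e, 0 < e & forall z, d y z < e ->
    bowen_ball_time1 d phi n x eps z.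
  by apply: IHn => j jn; apply/xy/ltnW.
have gap0 : 0 < eps - d (phi x n%:R) (phi y n%:R) by rewrite subr_gt0 xy.
have [e2 e20 near_y] := phi_cont y n%:R _ gap0.
exists (Num.min e1 e2); first by rewrite lt_min e10 e20.
move=> z; rewrite lt_min => /andP[yz1 yz2] j; rewrite ltnS leq_eqVlt => /orP[/eqP->|jn].
  have := near_y z n%:R yz2; rewrite subrr normr0 => /(_ e20) yzn.
  have := dT (phi x n%:R) (phi y n%:R) (phi z n%:R); lra.
exact: ball_n.
Qed.

Lemma bowen_ball_flow_open : unif_lipschitz d phi ->
  forall t x eps, dopen d (bowen_ball_flow d phi t x eps).
Proof.
move=> phi_lip t x eps y xy; have [_ _ _ dT] := d_metric.
have [t0|t_neg] := leP 0 t; last by exists 1 => // z _ s; lra.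
(* the orbit distance attains its maximum on [0, t], leaving a margin below [eps] *)
have [c ct maxc] := EVT_max t0 (continuous_subspaceT (@continuous_orbit_dist x y)).
have /andP[c0 c_t] : 0 <= c <= t by move: ct; rewrite in_itv.
have gap0 : 0 < eps - d (phi x c) (phi y c) by rewrite subr_gt0 xy // c0.
have [K [K0 lipK]] := phi_lip (t + 1) (ltr_pwDr ltr01 t0).
exists ((eps - d (phi x c) (phi y c)) / K); first by rewrite divr_gt0.
move=> z yz s /andP[s0 st].
have st1 : 0 <= s <= t + 1 by rewrite s0 /=; lra.
have yzs := lipK _ _ _ gap0 (ltW yz) s st1.
have := maxc s; rewrite in_itv /= s0 st => /(_ isT) dxys.
have := dT (phi x s) (phi y s) (phi z s); lra.
Qed.

Lemma bowen_ball_time1_center n x eps : 0 < eps -> bowen_ball_time1 d phi n x eps x.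
Proof. by have [_ d0 _ _] := d_metric; move=> eps0 j _; rewrite (proj2 (d0 _ _)). Qed.

Lemma bowen_ball_flow_center t x eps : 0 < eps -> bowen_ball_flow d phi t x eps x.
Proof. by have [_ d0 _ _] := d_metric; move=> eps0 s _; rewrite (proj2 (d0 _ _)). Qed.

Lemma bowen_ball_flow_sub_time1 n t x eps : n%:R <= t + 1 ->
  bowen_ball_flow d phi t x eps `<=` bowen_ball_time1 d phi n x eps.
Proof.
move=> nt y xy j jn; apply: xy; rewrite ler0n /=.
have : j.+1%:R <= n%:R :> R by rewrite ler_nat.
rewrite -natr1; lra.
Qed.

Lemma bowen_ball_time1_sub_flow L n t x eps : unif_lip_const d phi 1 L ->
  0 < eps -> (0 < n)%N -> t <= n%:R ->
  bowen_ball_time1 d phi n x (eps / L) `<=` bowen_ball_flow d phi t x eps.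
Proof.
have [_ _ phi_add] := phi_flow.
move=> [_ lipL] eps0 n0 tn y xy s /andP[s0 st].
have sn : 0 <= s <= n%:R by rewrite s0 /=; lra.
have [j jn /andP[js sj]] := exists_nat_step n0 sn.
have shift z : phi z s = phi (phi z j%:R) (s - j%:R) by rewrite -phi_add subrK.
rewrite !shift; apply: lipL => //; first exact/ltW/xy.
by apply/andP; split; lra.
Qed.

End bowen_balls.

Section katok_flow_time1.
Variables (R : realType) (dX : measure_display) (X : measurableType dX)
  (d : X -> X -> R) (phi : X -> R -> X) (mu : probability X R) (delta : R).
Hypotheses (d_metric : is_metric d) (d_compact : dcompact d) (d_borel : borel_for d)
  (phi_flow : is_flow d phi) (phi_lip : unif_lipschitz d phi) (delta01 : 0 <= delta < 1).

Let katok_time1 eps n := katokR mu (fun x => bowen_ball_time1 d phi n x eps) delta.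
Let katok_flow eps t := katokR mu (fun x => bowen_ball_flow d phi t x eps) delta.

Lemma katok_time1_ge1 eps n : 0 < eps -> 1 <= katok_time1 eps n.
Proof.
move=> eps0; rewrite /katok_time1; apply: (katokR_ge1 mu d_compact) => // x.
  by apply: bowen_ball_time1_open.
by apply: bowen_ball_time1_center.
Qed.

Lemma ln_katok_time1_ge0 eps n : 0 < eps -> 0 <= ln (katok_time1 eps n).
Proof. by move=> eps0; apply/ln_ge0/katok_time1_ge1. Qed.

Lemma ln_katok_time1_le_flow eps n t : 0 < eps -> n%:R <= t + 1 ->
  ln (katok_time1 eps n) <= ln (katok_flow eps t).
Proof.
move=> eps0 nt; apply: ler_ln_ge1; first exact: katok_time1_ge1.
have [_ delta1] := andP delta01.
rewrite /katok_time1 /katok_flow; apply: (le_katokR mu d_compact d_borel) => // x.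
- by apply: bowen_ball_flow_open.
- by apply: bowen_ball_flow_center.
- by apply: bowen_ball_time1_open.
- exact: bowen_ball_flow_sub_time1.
Qed.

Lemma ln_katok_flow_le_time1 L eps n t : unif_lip_const d phi 1 L -> 0 < eps ->
  (0 < n)%N -> t <= n%:R -> ln (katok_flow eps t) <= ln (katok_time1 (eps / L) n).
Proof.
move=> lipL eps0 n0 tn; have [L0 _] := lipL; have epsL0 : 0 < eps / L by rewrite divr_gt0.
have [_ delta1] := andP delta01.
apply: ler_ln_ge1.
  apply: (katokR_ge1 mu d_compact) => // x.
    by apply: bowen_ball_flow_open.
  by apply: bowen_ball_flow_center.
apply: (le_katokR mu d_compact d_borel) => // x.
- by apply: bowen_ball_time1_open.
- by apply: bowen_ball_time1_center.
- by apply: bowen_ball_flow_open.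
- by apply: bowen_ball_time1_sub_flow.
Qed.

End katok_flow_time1.

Theorem proposition3p2 (R : realType) (dX : measure_display) (X : measurableType dX)
  (d : X -> X -> R) (phi : X -> R -> X) (L : R) (mu : probability X R) :
  is_metric d -> dcompact d -> borel_for d ->
  is_flow d phi -> unif_lipschitz d phi -> unif_lip_const d phi 1 L ->
  forall delta eps : R, 0 < delta < 1 -> 0 < eps ->
  ((katok_upper_time1 mu d phi eps delta <= katok_upper_flow mu d phi eps delta)%E /\
   (katok_upper_flow mu d phi eps delta <= katok_upper_time1 mu d phi (eps / L) delta)%E) /\
  ((katok_lower_time1 mu d phi eps delta <= katok_lower_flow mu d phi eps delta)%E /\
   (katok_lower_flow mu d phi eps delta <= katok_lower_time1 mu d phi (eps / L) delta)%E).
Proof.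
move=> d_metric d_compact d_borel phi_flow phi_lip lipL delta eps /andP[delta0 delta1] eps0.
have delta01 : 0 <= delta < 1 by rewrite (ltW delta0) delta1.
have epsL0 : 0 < eps / L by case: lipL => L0 _; rewrite divr_gt0.
have time1_ge0 := ln_katok_time1_ge0 mu d_metric d_compact phi_flow delta01.
have time1_le_flow :=
  ln_katok_time1_le_flow mu d_metric d_compact d_borel phi_flow phi_lip delta01 eps0.
have flow_le_time1 :=
  ln_katok_flow_le_time1 mu d_metric d_compact d_borel phi_flow phi_lip delta01 lipL eps0.
split; split.
- by apply: limn_esup_div_le_limf => n; apply: time1_le_flow; rewrite lerDl.
- apply: limf_esup_div_le_limn => [n|t t0]; first exact: time1_ge0.
  by apply: flow_le_time1 => //; rewrite ltW ?truncnS_gt.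
- apply: limn_einf_div_le_limf => [n|t t0]; first exact: time1_ge0.
  by apply: time1_le_flow; rewrite -natr1 lerD2r truncn_le ltW.
- by apply: limf_einf_div_le_limn => n n0; apply: flow_le_time1.
Qed.
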